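(* Let $X$ be a unital prime Banach algebra containing a nontrivial idempotent element. Let $h:X\to X$ be an odd mapping such that $$\|h(xyx)-h(x)yx-xh(y)x-xyh(x)\|\le\theta(\|x\|^p+\|y\|^q),$$ $$\|h(x+my)+h(x-my)-2h(x)+2m^2h(y)-m^2h(2y)\|\le\theta(\|x\|^p+\|y\|^q)$$ for all $x,y\in X$, for some constants $\theta,p,q,m$, where $m$ is a nonzero even integer and $p<2$, $q<1$. Then $h$ is a derivation.
   Context: An algebra $X$ is prime if it is nontrivial and for any $a,b\in X$, $arb=0$ for all $r\in X$ implies $a=0$ or $b=0$. A nontrivial idempotent is an element $e$ with $e^2=e$, $e\neq0$, $e\neq\mathbf{1}$. A derivation is an additive map $D:X\to X$ with $D(xy)=D(x)y+xD(y)$ for all $x,y\in X$. *)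

From HB Require Import structures.
From mathcomp Require Import all_boot all_order all_algebra.
From mathcomp Require Import all_classical all_reals all_analysis.
Set Implicit Arguments. Unset Strict Implicit. Unset Printing Implicit Defensive.
Import Order.TTheory GRing.Theory Num.Theory.
Import numFieldNormedType.Exports.
Local Open Scope ring_scope.

(* HB cannot join the ring hierarchy with the normed-module hierarchy
   (conflict with Num.NumDomain), so a unital Banach algebra over R is given
   as a Banach space X (completeNormedModType R) together with an explicit
   multiplication [mul] and unit [one] satisfying the algebra axioms and
   submultiplicativity of the norm. *)
Record unital_banach_algebra (R : numFieldType) (X : completeNormedModType R)
    (mul : X -> X -> X) (one : X) : Prop := {
  ba_mulA : forall x y z, mul x (mul y z) = mul (mul x y) z;
  ba_mul1x : forall x, mul one x = x;
  ba_mulx1 : forall x, mul x one = x;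
  ba_mulDl : forall x y z, mul (x + y) z = mul x z + mul y z;
  ba_mulDr : forall x y z, mul x (y + z) = mul x y + mul x z;
  ba_mulZl : forall (a : R) x y, mul (a *: x) y = a *: mul x y;
  ba_mulZr : forall (a : R) x y, mul x (a *: y) = a *: mul x y;
  ba_normM_le : forall x y, `|mul x y| <= `|x| * `|y|
}.

Definition prime_algebra (X : zmodType) (mul : X -> X -> X) : Prop :=
  (exists x : X, x != 0) /\
  forall a b : X, (forall r : X, mul (mul a r) b = 0) -> a = 0 \/ b = 0.

Definition nontrivial_idempotent (X : zmodType) (mul : X -> X -> X) (one e : X)
  : Prop := mul e e = e /\ e != 0 /\ e != one.

Definition derivation (X : zmodType) (mul : X -> X -> X) (D : X -> X) : Prop :=
  (forall x y, D (x + y) = D x + D y) /\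
  (forall x y, D (mul x y) = mul (D x) y + mul x (D y)).

From HB Require Import structures.
From mathcomp Require Import all_boot all_order all_algebra.
From mathcomp Require Import all_classical all_reals all_analysis.
Import Order.TTheory GRing.Theory Num.Theory.
Import numFieldNormedType.Exports.
Local Open Scope ring_scope.
From mathcomp Require Import ring.
Set Implicit Arguments. Unset Strict Implicit. Unset Printing Implicit Defensive.

(* Setting x = 0 in the quadratic inequality gives |h(2z) - 2h(z)| <= theta (1 + |z|^q),
   so by Hyers' direct method L(z) = lim 2^-n h(2^n z) exists (q < 1).  Rescaling the
   Jordan-triple inequality by 2^n in y alone, resp. in both x and y, and letting
   n -> oo gives
     L(xyx) = h(x)yx + xL(y)x + xyh(x)  and  L(xyx) = L(x)yx + xL(y)x + xyL(x),
   hence (L x - h x) y x + x y (L x - h x) = 0 for all y, which forces L = h in a prime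
   algebra.  So h is a Jordan triple derivation, not assumed additive.  In a
   2-torsion-free prime ring with a nontrivial idempotent e, the Peirce decomposition
   relative to e and 1 - e shows that such a map is additive, and an additive Jordan
   triple derivation D of a prime ring is a derivation: the Leibniz defect of a, b is
   annihilated, on both sides, by the commutator [b, a], and no prime ring with a
   nontrivial idempotent is commutative. *)

(** * Normal forms in abelian groups *)

Inductive zmod_expr :=
  | ZAtom of nat | ZZero | ZAdd of zmod_expr & zmod_expr | ZOpp of zmod_expr.

Section ZmodNormalForm.
Variable V : zmodType.
Implicit Types (env : seq V) (cs : seq int).

Fixpoint zmod_eval env e : V :=
  match e with
  | ZAtom i => nth 0 env i
  | ZZero => 0
  | ZAdd a b => zmod_eval env a + zmod_eval env b
  | ZOpp a => - zmod_eval env a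
  end.

Fixpoint coef_eval env cs : V :=
  if (env, cs) is (v :: env', c :: cs') then v *~ c + coef_eval env' cs' else 0.

Fixpoint coef_add cs cs' : seq int :=
  match cs, cs' with
  | c :: cs1, c' :: cs1' => (c + c') :: coef_add cs1 cs1'
  | [::], _ => cs'
  | _, [::] => cs
  end.

Fixpoint coef_atom i : seq int := if i is i'.+1 then 0 :: coef_atom i' else [:: 1].

Fixpoint zmod_coefs e : seq int :=
  match e with
  | ZAtom i => coef_atom i
  | ZZero => [::]
  | ZAdd a b => coef_add (zmod_coefs a) (zmod_coefs b)
  | ZOpp a => map -%R (zmod_coefs a)
  end.

Lemma coef_eval_add env cs cs' :
  coef_eval env (coef_add cs cs') = coef_eval env cs + coef_eval env cs'.
Proof.
elim: env cs cs' => [|v env IH] [|c cs] [|c' cs'] //=; rewrite ?addr0 ?add0r //.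
by rewrite IH mulrzDr addrACA.
Qed.

Lemma coef_eval_opp env cs : coef_eval env (map -%R cs) = - coef_eval env cs.
Proof.
elim: env cs => [|v env IH] [|c cs] //=; rewrite ?oppr0 //.
by rewrite IH mulrNz opprD.
Qed.

Lemma coef_eval_atom env i : coef_eval env (coef_atom i) = nth 0 env i.
Proof.
elim: i env => [|i IH] [|v env] /=; rewrite ?mulr0z ?add0r ?IH //.
by case: env => [|w env] /=; rewrite ?addr0 //; case: env => [|u env]; rewrite /= addr0.
Qed.

Lemma zmod_eval_coefs env e : zmod_eval env e = coef_eval env (zmod_coefs e).
Proof.
elim: e => [i||a IHa b IHb|a IHa] /=.
- by rewrite coef_eval_atom.
- by case: env.
- by rewrite coef_eval_add IHa IHb.
- by rewrite coef_eval_opp IHa.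
Qed.

Lemma coef_eval_zero env cs : all (eq_op^~ 0) cs -> coef_eval env cs = 0.
Proof.
elim: env cs => [|v env IH] [|c cs] //= /andP[/eqP-> /IH->].
by rewrite mulr0z addr0.
Qed.

Lemma zmod_eval_eq env e1 e2 :
  all (eq_op^~ 0) (zmod_coefs (ZAdd e1 (ZOpp e2))) ->
  zmod_eval env e1 = zmod_eval env e2.
Proof.
move=> /(coef_eval_zero env); rewrite -zmod_eval_coefs /= => /eqP.
by rewrite subr_eq0 => /eqP.
Qed.

End ZmodNormalForm.

Ltac zmod_same x y := constr:(ltac:(first [unify x y; exact true | exact false])).

Ltac zmod_mem x l :=
  lazymatch l with
  | nil => constr:(false)
  | ?y :: ?l' =>
    let b := zmod_same x y in
    lazymatch b with true => constr:(true) | false => zmod_mem x l' end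
  end.

Ltac zmod_atoms t acc :=
  lazymatch t with
  | (?a + ?b)%R => let acc' := zmod_atoms a acc in zmod_atoms b acc'
  | (- ?a)%R => zmod_atoms a acc
  | 0%R => acc
  | _ => let b := zmod_mem t acc in
         lazymatch b with true => acc | false => constr:(t :: acc) end
  end.

Ltac zmod_index x l :=
  lazymatch l with
  | ?y :: ?l' =>
    let b := zmod_same x y in
    lazymatch b with
    | true => constr:(0%N)
    | false => let n := zmod_index x l' in constr:(n.+1)
    end
  end.

Ltac zmod_reify t env :=
  lazymatch t with
  | (?a + ?b)%R =>
    let ea := zmod_reify a env in let eb := zmod_reify b env in constr:(ZAdd ea eb)
  | (- ?a)%R => let ea := zmod_reify a env in constr:(ZOpp ea)
  | 0%R => constr:(ZZero)
  | _ => let n := zmod_index t env in constr:(ZAtom n)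
  end.

(* Decides equalities between sums and differences in a zmodType, treating
   every other subterm as an opaque atom (up to unification). *)
Ltac abel :=
  lazymatch goal with
  | |- @eq ?T ?L ?R =>
    let env := zmod_atoms L (@nil T) in
    let env := zmod_atoms R env in
    let eL := zmod_reify L env in
    let eR := zmod_reify R env in
    change (zmod_eval env eL = zmod_eval env eR);
    apply: zmod_eval_eq; vm_compute; reflexivity
  end.

(** * Jordan triple derivations of prime rings *)

Lemma subgroup_cover2 (V : zmodType) (P Q : V -> Prop) :
  (forall x, P x \/ Q x) ->
  (forall x y, P x -> P y -> P (x - y)) ->
  (forall x y, Q x -> Q y -> Q (x - y)) ->
  (forall x, P x) \/ (forall x, Q x).
Proof.
move=> PQ subP subQ.
have [|/existsNP[x nPx]] := pselect (forall x, P x); first by left.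
right=> y; have [Py|//] := PQ y.
have Qx : Q x by case: (PQ x).
have [Pxy|Qxy] := PQ (x - y).
  have Py' : P (- y) by have := subP _ _ (subP _ _ Py Py) Py; rewrite subrr sub0r.
  by have := subP _ _ Pxy Py'; rewrite opprK subrK.
by have := subQ _ _ Qx Qxy; rewrite opprB addrC subrK.
Qed.

Lemma eq_of_sub_eq (V : zmodType) (x y u v : V) : u = v -> x - y = u - v -> x = y.
Proof. by move=> -> /eqP; rewrite subrr subr_eq0 => /eqP. Qed.

Ltac expand := rewrite ?(mulrDl, mulrDr, mulNr, mulrN, mul0r, mulr0, mulrA, opprK,
  oppr0, addr0, add0r, opprD).

Lemma mulrA_eq (A : pzRingType) (x y z : A) : x * y = z -> forall a, a * x * y = a * z.
Proof. by move=> xy a; rewrite -mulrA xy. Qed.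

Section PrimeRing.
Variable A : pzRingType.
Hypothesis primeA : forall {a b : A}, (forall r, a * r * b = 0) -> a = 0 \/ b = 0.
Hypothesis two_torsion_free : forall x : A, x + x = 0 -> x = 0.

Lemma eq0_of_triple (x : A) : x = x + x + x -> x = 0.
Proof.
move=> x3; apply: two_torsion_free.
by transitivity (x + x + x - x); [abel | rewrite -x3 subrr].
Qed.

Lemma sandwich_sym_eq0 (u v : A) :
  (forall r, u * r * v + v * r * u = 0) -> u = 0 \/ v = 0.
Proof.
move=> uv; have uvN r : u * r * v = - (v * r * u) by apply/eqP; rewrite -addr_eq0 uv.
have vu0 x z : v * x * (u * z * u) = 0.
  apply: two_torsion_free; rewrite !mulrA.
  have uxuzvN : u * x * u * z * v = - (v * x * u * z * u).
    by have := uvN (x * u * z); rewrite !mulrA.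
  have uxuzv : u * x * u * z * v = v * x * u * z * u.
    transitivity (u * x * (u * z * v)); first by rewrite !mulrA.
    by rewrite uvN mulrN !mulrA (uvN x) !mulNr opprK.
  by rewrite -{1}uxuzv uxuzvN addNr.
have [->|v0] := eqVneq v 0; first by right.
left; have uzu0 z : u * z * u = 0.
  by case: (primeA (vu0^~ z)) => // v00; rewrite v00 eqxx in v0.
by case: (primeA uzu0).
Qed.

Record peirce_pair (e f : A) : Prop := {
  pp_ee : e * e = e; pp_ff : f * f = f; pp_ef : e * f = 0; pp_fe : f * e = 0;
  pp_sum : e + f = 1; pp_e_neq0 : e != 0; pp_f_neq0 : f != 0 }.

Lemma peirce_pairC e f : peirce_pair e f -> peirce_pair f e.
Proof. by case=> *; split=> //; rewrite addrC. Qed.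

Lemma peirce_pair_idem e : e * e = e -> e != 0 -> e != 1 -> peirce_pair e (1 - e).
Proof.
move=> ee e0 e1; split=> //.
- by rewrite mulrBl !mulrBr !mul1r mulr1 ee subrr subr0.
- by rewrite mulrBr mulr1 ee subrr.
- by rewrite mulrBl mul1r ee subrr.
- by rewrite addrC subrK.
- by rewrite subr_eq0 eq_sym.
Qed.

Ltac peirce_simp P := rewrite ?(pp_ee P, pp_ff P, pp_ef P, pp_fe P,
  mulrA_eq (pp_ee P), mulrA_eq (pp_ff P), mulrA_eq (pp_ef P), mulrA_eq (pp_fe P),
  mulr0, mul0r, addr0, add0r, oppr0, subr0, sub0r).

Lemma peirce_decomp e f (P : peirce_pair e f) z :
  z = e * z * e + e * z * f + f * z * e + f * z * f.
Proof.
have {1}-> : z = (e + f) * z * (e + f) by rewrite (pp_sum P) mul1r mulr1.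
by expand; abel.
Qed.

Lemma peirce_eq0 e f (P : peirce_pair e f) (T : A) :
  e * T * e = 0 -> f * T * f = 0 ->
  (forall r, (f + e * r * f) * T * (f + e * r * f) = 0) ->
  (forall r, (f + f * r * e) * T * (f + f * r * e) = 0) -> T = 0.
Proof.
move=> eTe fTf ef fe.
have fTe : f * T * e = 0.
  suff /primeA[//|f0] : forall r, f * T * e * r * f = 0 by case/eqP: (pp_f_neq0 P).
  move=> r; have := congr1 (fun y => f * y) (ef r); expand; peirce_simp P.
  by rewrite fTf add0r.
have eTf : e * T * f = 0.
  suff /primeA[f0|//] : forall r, f * r * (e * T * f) = 0 by case/eqP: (pp_f_neq0 P).
  move=> r; have := congr1 (fun y => y * f) (fe r); expand; peirce_simp P.
  by rewrite fTf add0r.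
by rewrite (peirce_decomp P T) eTe eTf fTe fTf !addr0.
Qed.

Lemma corner_fixed_eq0 e f (P : peirce_pair e f) (T : A) : e * T * e = T ->
  (forall r, (e + e * r * f) * T * (e + e * r * f) = T) -> T = 0.
Proof.
move=> eTe fixT; suff /primeA[//|f0] : forall r, T * r * f = 0.
  by case/eqP: (pp_f_neq0 P).
move=> r; have := fixT r; rewrite -eTe; expand; peirce_simp P; rewrite eTe.
by move/eqP; rewrite addrC -subr_eq0 addrK => /eqP.
Qed.

Section JordanTriple.
Variable D : A -> A.
Hypothesis DJ : forall x y, D (x * y * x) = D x * y * x + x * D y * x + x * y * D x.

Definition add_defect a b := D (a + b) - D a - D b.

Lemma jt_D0 : D 0 = 0.
Proof. by have := DJ 0 0; rewrite !mul0r !mulr0 !addr0. Qed.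

Lemma jt_D1 : D 1 = 0.
Proof. by apply: eq0_of_triple; have := DJ 1 1; rewrite !mul1r !mulr1 => {1}->. Qed.

Lemma add_defect_sandwich x a b :
  x * add_defect a b * x = add_defect (x * a * x) (x * b * x).
Proof.
rewrite /add_defect.
have -> : x * a * x + x * b * x = x * (a + b) * x by rewrite mulrDr mulrDl.
by rewrite !DJ; expand; abel.
Qed.

Lemma add_defect0l b : add_defect 0 b = 0.
Proof. by rewrite /add_defect add0r jt_D0 subr0 subrr. Qed.

Lemma add_defect0r a : add_defect a 0 = 0.
Proof. by rewrite /add_defect addr0 jt_D0 subr0 subrr. Qed.

Lemma add_defect_eq0 a b : add_defect a b = 0 -> D (a + b) = D a + D b.
Proof. by move/eqP; rewrite subr_eq0 subr_eq => /eqP ->; rewrite addrC. Qed.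

Lemma add_defect_corner e f (P : peirce_pair e f) a b :
  e * a * e = a -> e * b * e = 0 -> add_defect a b = 0.
Proof.
move=> ae be.
have outer_eq0 x : x * e = 0 \/ e * x = 0 -> add_defect (x * a * x) (x * b * x) = 0.
  rewrite -ae !mulrA => -[xe|ex]; first by rewrite xe !mul0r add_defect0l.
  by rewrite -(mulrA _ e x) ex mulr0 add_defect0l.
apply: (peirce_eq0 P); try move=> r; rewrite add_defect_sandwich.
- by rewrite ae be add_defect0r.
- by rewrite outer_eq0 // (pp_fe P); left.
- by rewrite outer_eq0 //; left; expand; peirce_simp P.
- by rewrite outer_eq0 //; right; expand; peirce_simp P.
Qed.

Section Normalized.
Variables e f : A.
Hypothesis P : peirce_pair e f.
Hypothesis De : D e = 0.
Hypothesis Df : D f = 0.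

Lemma D_corner_e y : D (e * y * e) = e * D y * e.
Proof. by rewrite DJ De !mul0r mulr0 add0r addr0. Qed.

Lemma D_corner_f y : D (f * y * f) = f * D y * f.
Proof. by rewrite DJ Df !mul0r mulr0 add0r addr0. Qed.

Lemma D_offdiag z : e * z * e = 0 -> f * z * f = 0 -> D z = e * D z * f + f * D z * e.
Proof.
move=> eze fzf; rewrite {1}(peirce_decomp P (D z)).
by rewrite -D_corner_e -D_corner_f eze fzf jt_D0 add0r addr0.
Qed.

Lemma D_offdiag_ef r : D (e * r * f) = e * D (e * r * f) * f + f * D (e * r * f) * e.
Proof. by apply: D_offdiag; expand; peirce_simp P. Qed.

Lemma D_offdiag_fe r : D (f * r * e) = e * D (f * r * e) * f + f * D (f * r * e) * e.
Proof. by apply: D_offdiag; expand; peirce_simp P. Qed.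

Lemma D_add_corner a b : e * a * e = a -> e * b * e = 0 -> D (a + b) = D a + D b.
Proof. by move=> ae be; apply/add_defect_eq0/(add_defect_corner P). Qed.

Lemma D_mul_diag_offdiag p r : D (e * p * e * (e * r * f)) =
  D (e * p * e) * (e * r * f) + e * p * e * D (e * r * f) * f
  + f * D (e * r * f) * (e * p * e).
Proof.
have := DJ (e * p * e + f) (e * r * f).
have -> : (e * p * e + f) * (e * r * f) * (e * p * e + f) = e * p * e * (e * r * f).
  by expand; peirce_simp P.
move=> ->; rewrite D_add_corner ?Df; try by expand; peirce_simp P.
rewrite addr0 D_corner_e D_offdiag_ef; expand; peirce_simp P; abel.
Qed.

Lemma D_corner_mul_offdiag p r s : e * D (p + r * f * s) * e =
  e * D p * e + e * D (e * r * f) * f * s * e + e * r * f * D (f * s * e) * e.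
Proof.
have := DJ (e + e * r * f) (e * p * e + f * s * e).
have -> : (e + e * r * f) * (e * p * e + f * s * e) * (e + e * r * f) =
    e * (p + r * f * s) * e + e * (p + r * f * s) * e * (e * r * f).
  by expand; peirce_simp P; abel.
move=> E; rewrite !D_add_corner ?De ?add0r in E; try by expand; peirce_simp P.
rewrite D_mul_diag_offdiag !D_corner_e D_offdiag_ef D_offdiag_fe in E.
apply: (eq_of_sub_eq (congr1 (fun z => e * z * e) E)).
by rewrite D_offdiag_ef D_offdiag_fe; expand; peirce_simp P; abel.
Qed.

Lemma add_defect_diag_mul_offdiag p r s :
  add_defect (e * p * e) (e * r * f * (f * s * e)) = 0.
Proof.
rewrite /add_defect.
have -> : e * p * e + e * r * f * (f * s * e) = e * (p + r * f * s) * e.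
  by expand; peirce_simp P; abel.
have -> : e * r * f * (f * s * e) = e * (0 + r * f * s) * e.
  by expand; peirce_simp P.
rewrite !D_corner_e !D_corner_mul_offdiag jt_D0 mulr0 mul0r add0r; abel.
Qed.

Lemma add_defect_offdiag r r' : add_defect (e * r * f) (e * r' * f) = 0.
Proof.
have fef u : f * (e * u * f) * f = 0 by expand; peirce_simp P.
have eef u : e * (e * u * f) * e = 0 by expand; peirce_simp P.
apply: (peirce_eq0 (peirce_pairC P)) => [||s|s]; rewrite add_defect_sandwich.
- by rewrite !fef add_defect0l.
- by rewrite !eef add_defect0l.
- have -> : (e + f * s * e) * (e * r * f) * (e + f * s * e) =
      (e + f * s * e) * (e * (r * f * s) * e) * (e + f * s * e).
    by expand; peirce_simp P; abel.
  have -> : (e + f * s * e) * (e * r' * f) * (e + f * s * e) =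
      (e + f * s * e) * (e * r' * f * (f * s * e)) * (e + f * s * e).
    by expand; peirce_simp P; abel.
  by rewrite -add_defect_sandwich add_defect_diag_mul_offdiag mulr0 mul0r.
- have -> u : (e + e * s * f) * (e * u * f) * (e + e * s * f) = 0.
    by expand; peirce_simp P.
  by rewrite add_defect0l.
Qed.

Lemma add_defect_diag p q : add_defect (e * p * e) (e * q * e) = 0.
Proof.
apply: (corner_fixed_eq0 P) => [|r].
  by rewrite add_defect_sandwich; congr add_defect; expand; peirce_simp P.
have skew u : (e + e * r * f) * (e * u * e) * (e + e * r * f) =
    e * u * e + e * (u * e * r) * f.
  by expand; peirce_simp P; abel.
have diag_offdiag u v : D (e * u * e + e * v * f) = D (e * u * e) + D (e * v * f).
  by apply: D_add_corner; expand; peirce_simp P.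
rewrite add_defect_sandwich !skew /add_defect.
have -> : e * p * e + e * (p * e * r) * f + (e * q * e + e * (q * e * r) * f) =
    e * (p + q) * e + e * (p * e * r + q * e * r) * f.
  by expand; abel.
rewrite !diag_offdiag !(mulrDr, mulrDl) (add_defect_eq0 (add_defect_offdiag _ _)).
by rewrite /add_defect; abel.
Qed.

End Normalized.

Lemma add_defect_normalized e f (P : peirce_pair e f) :
  D e = 0 -> D f = 0 -> forall a b, add_defect a b = 0.
Proof.
move=> De Df a b; have P' := peirce_pairC P.
apply: (peirce_eq0 P); rewrite ?add_defect_sandwich.
- exact: (add_defect_diag P De Df).
- exact: (add_defect_diag P' Df De).
- move=> r; rewrite add_defect_sandwich.
  have E z : (f + e * r * f) * z * (f + e * r * f) =
      (f + e * r * f) * (f * (z + z * e * r) * f) * (f + e * r * f).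
    by expand; peirce_simp P; abel.
  by rewrite (E a) (E b) -add_defect_sandwich (add_defect_diag P' Df De) mulr0 mul0r.
- move=> r; rewrite add_defect_sandwich.
  have E z : (f + f * r * e) * z * (f + f * r * e) =
      (f + f * r * e) * (f * (z + r * e * z) * f) * (f + f * r * e).
    by expand; peirce_simp P; abel.
  by rewrite (E a) (E b) -add_defect_sandwich (add_defect_diag P' Df De) mulr0 mul0r.
Qed.

End JordanTriple.

Lemma jordan_triple_additive e f (P : peirce_pair e f) (D : A -> A) :
  (forall x y, D (x * y * x) = D x * y * x + x * D y * x + x * y * D x) ->
  forall a b, D (a + b) = D a + D b.
Proof.
move=> DJ a b.
(* Subtracting the inner derivation [_, c] makes D vanish on e and f. *)
pose c := e * D e * f - f * D e * e.
pose D' x := D x - (x * c - c * x).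
have D'J x y : D' (x * y * x) = D' x * y * x + x * D' y * x + x * y * D' x.
  by rewrite /D' /c !DJ; expand; abel.
have Dee := DJ e e; rewrite !(pp_ee P) in Dee.
have eDe : e * D e * e = 0.
  apply: eq0_of_triple; have := congr1 (fun z => e * z * e) Dee; expand; peirce_simp P.
  by move=> {1}->.
have fDf : f * D e * f = 0.
  by have := congr1 (fun z => f * z * f) Dee; expand; peirce_simp P.
have D'e : D' e = 0.
  by rewrite /D' /c {1}(peirce_decomp P (D e)) eDe fDf; expand; peirce_simp P; abel.
have D'f : D' f = 0.
  have eee : e * e * e = e by rewrite !(pp_ee P).
  have efe : e * f * e = 0 by rewrite (pp_ef P) mul0r.
  have := add_defect_eq0 (add_defect_corner D'J P eee efe).
  by rewrite (pp_sum P) D'e add0r (jt_D1 D'J).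
have := add_defect_normalized D'J P D'e D'f a b.
rewrite /add_defect /D' => D'add.
by apply: (eq_of_sub_eq D'add); expand; abel.
Qed.

Section AdditiveJordanTriple.
Variable D : A -> A.
Hypothesis DJ : forall x y, D (x * y * x) = D x * y * x + x * D y * x + x * y * D x.
Hypothesis DD : forall a b, D (a + b) = D a + D b.

Lemma jt_DB a b : D (a - b) = D a - D b.
Proof.
suff DN : D (- b) = - D b by rewrite DD DN.
by apply/eqP; rewrite -addr_eq0 -DD addNr (jt_D0 DJ).
Qed.

Lemma jt_jordan x : D (x * x) = D x * x + x * D x.
Proof. by have := DJ x 1; rewrite !mulr1 (jt_D1 DJ) mulr0 mul0r addr0. Qed.

Lemma jt_linearized x y z : D (x * y * z) + D (z * y * x) =
  D x * y * z + x * D y * z + x * y * D z + D z * y * x + z * D y * x + z * y * D x.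
Proof.
have := DJ (x + z) y; expand; rewrite !DD !DJ => E.
by apply: (eq_of_sub_eq E); expand; abel.
Qed.

Definition leib_defect a b := D (a * b) - D a * b - a * D b.

Lemma leib_defect_antisym a b : leib_defect a b + leib_defect b a = 0.
Proof.
have := jt_jordan (a + b); expand; rewrite !DD !jt_jordan => E.
by apply: (eq_of_sub_eq E); rewrite /leib_defect; expand; abel.
Qed.

Lemma leib_defectBl a1 a2 b :
  leib_defect (a1 - a2) b = leib_defect a1 b - leib_defect a2 b.
Proof. by rewrite /leib_defect mulrBl !jt_DB; expand; abel. Qed.

Lemma leib_defectBr a b1 b2 :
  leib_defect a (b1 - b2) = leib_defect a b1 - leib_defect a b2.
Proof. by rewrite /leib_defect mulrBr !jt_DB; expand; abel. Qed.

Lemma leib_defect_sandwich a b r :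
  leib_defect a b * r * (b * a - a * b) + (b * a - a * b) * r * leib_defect a b = 0.
Proof.
have := jt_linearized (a * b) r (b * a).
have -> : a * b * r * (b * a) = a * (b * r * b) * a by rewrite !mulrA.
have -> : b * a * r * (a * b) = b * (a * r * a) * b by rewrite !mulrA.
have Dba : D (b * a) = - leib_defect a b + D b * a + b * D a.
  by apply: (eq_of_sub_eq (leib_defect_antisym a b)); rewrite /leib_defect; abel.
rewrite !DJ Dba => E.
by apply: (eq_of_sub_eq (esym E)); rewrite /leib_defect; expand; abel.
Qed.

Lemma leib_defect0_or_comm a b : leib_defect a b = 0 \/ GRing.comm a b.
Proof.
have [|] := sandwich_sym_eq0 (leib_defect_sandwich a b); first by left.
by move/eqP; rewrite subr_eq0 => /eqP; right.
Qed.

Lemma leib_defect_eq0 e f : peirce_pair e f -> forall a b, leib_defect a b = 0.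
Proof.
move=> P.
have cover_b a : (forall b, leib_defect a b = 0) \/ (forall b, GRing.comm a b).
  apply: (subgroup_cover2 (leib_defect0_or_comm a)) => x y.
    by rewrite leib_defectBr => -> ->; rewrite subrr.
  exact: commrB.
have [//|central] :
    (forall a b, leib_defect a b = 0) \/ (forall a b : A, GRing.comm a b).
  apply: (subgroup_cover2 cover_b) => x y Hx Hy b.
    by rewrite leib_defectBl Hx Hy subrr.
  by apply/commr_sym/commrB; apply/commr_sym.
suff /primeA[e0|f0] : forall r, e * r * f = 0.
- by case/eqP: (pp_e_neq0 P).
- by case/eqP: (pp_f_neq0 P).
by move=> r; rewrite (central e r) -mulrA (pp_ef P) mulr0.
Qed.

End AdditiveJordanTriple.

Theorem jordan_triple_derivation (e : A) (D : A -> A) :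
  e * e = e -> e != 0 -> e != 1 ->
  (forall x y, D (x * y * x) = D x * y * x + x * D y * x + x * y * D x) ->
  (forall a b, D (a + b) = D a + D b) /\ (forall a b, D (a * b) = D a * b + a * D b).
Proof.
move=> ee e0 e1 DJ; have P := peirce_pair_idem ee e0 e1.
have DD := jordan_triple_additive P DJ; split=> // a b.
by apply: subr0_eq; rewrite opprD addrA; exact: (leib_defect_eq0 DJ DD P).
Qed.
End PrimeRing.

(** * Stability of Jordan triple derivations in Banach algebras *)

Local Open Scope classical_set_scope.

Section Limits.
Variables (R : realType) (V W : normedModType R).
Implicit Types (u : nat -> V) (l : V).

Lemma cvg_lipschitz (f : V -> W) (k : R) u l :
  (forall x y, `|f x - f y| <= k * `|x - y|) ->
  u @ \oo --> l -> (fun n => f (u n)) @ \oo --> f l.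
Proof.
move=> fk ul.
have [c c0 fc] : exists2 c, 0 < c & forall x y, `|f x - f y| <= c * `|x - y|.
  exists (Num.max k 1); first by rewrite lt_max ltr01 orbT.
  by move=> x y; apply: le_trans (fk x y) _; rewrite ler_wpM2r // le_max lexx.
apply/cvgrPdistC_le => e e0; near=> n.
apply: le_trans (fc _ _) _; rewrite -ler_pdivlMl //.
by near: n; apply: (cvgr_distC_le _ _ ul); rewrite mulr_gt0 ?invr_gt0.
Unshelve. all: end_near. Qed.

Lemma cvg_norm_le_eq0 u l (w : nat -> R) :
  u @ \oo --> l -> w @ \oo --> 0 -> (forall n, `|u n| <= w n) -> l = 0.
Proof.
move=> ul w0 uw; apply/normr0_eq0/le_anti; rewrite normr_ge0 andbT.
by apply: (ler_cvg_to (cvg_norm ul) w0); apply: nearW.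
Qed.

Lemma cvg_subseq_mul u l (k : nat) : (0 < k)%N ->
  u @ \oo --> l -> (fun n => u (k * n)%N) @ \oo --> l.
Proof.
move=> k0; apply: cvg_comp; apply/cvgnyPge => N.
by exists N => // n /= Nn; rewrite (leq_trans Nn) // leq_pmull.
Qed.
End Limits.

Lemma powR2_lt (R : realType) (x y : R) : x < y -> 2 `^ x < 2 `^ y.
Proof.
move=> xy; rewrite /powR pnatr_eq0 /= ltr_expR ltr_pM2r //.
by rewrite ln_gt0 // ltr1n.
Qed.

Lemma powR2_expn (R : realType) (n : nat) (r : R) : (2 ^+ n) `^ r = (2 `^ r) ^+ n.
Proof. by rewrite -powR_mulrn // powRAC powR_mulrn // powR_ge0. Qed.

Lemma addrr_eq0 (R : numFieldType) (V : lmodType R) (x : V) : x + x = 0 -> x = 0.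
Proof.
move=> xx0; have /eqP : (2 : R) *: x = 0 by rewrite scaler_nat mulr2n.
by rewrite scaler_eq0 pnatr_eq0 => /eqP.
Qed.

Lemma odd_map0 (R : numFieldType) (V : lmodType R) (h : V -> V) :
  (forall x, h (- x) = - h x) -> h 0 = 0.
Proof. by move=> h_odd; apply: addrr_eq0; rewrite -{1}oppr0 h_odd addNr. Qed.

Lemma half_lt1 (R : realFieldType) : `|(2 : R)^-1| < 1.
Proof. by rewrite ger0_norm ?invr_ge0 // invf_lt1 // ltr1n. Qed.

Lemma powR2_ratio_lt1 (R : realType) (r : R) (k : nat) :
  r < k%:R -> `|2 `^ r / 2 ^+ k| < 1.
Proof.
move=> rk; rewrite ger0_norm ?divr_ge0 ?powR_ge0 ?exprn_ge0 //.
rewrite ltr_pdivrMr ?exprn_gt0 //.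
by rewrite mul1r -powR_mulrn // powR2_lt.
Qed.

Section HyersSequence.
Variables (R : realType) (X : completeNormedModType R) (h : X -> X) (theta q : R).
Hypothesis theta_ge0 : 0 <= theta.
Hypothesis q_lt1 : q < 1.
Hypothesis h_double : forall z, `|h (2 *: z) - 2 *: h z| <= theta * (1 + `|z| `^ q).

Definition hyers_seq n z : X := (2 ^+ n)^-1 *: h (2 ^+ n *: z).

Definition hyers_lim z : X := limn (hyers_seq^~ z).

Lemma hyers_seq_step n z : `|hyers_seq n.+1 z - hyers_seq n z| <=
  theta / 2 * (2^-1) ^+ n + theta / 2 * `|z| `^ q * (2 `^ q / 2) ^+ n.
Proof.
set w := 2 ^+ n *: z.
have -> : hyers_seq n.+1 z - hyers_seq n z = (2 ^+ n.+1)^-1 *: (h (2 *: w) - 2 *: h w).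
  rewrite /hyers_seq /w scalerA exprS scalerBr scalerA; congr (_ *: _ - _ *: _).
  by rewrite invfM mulrAC mulVf ?mul1r // pnatr_eq0.
rewrite normrZ ger0_norm ?invr_ge0 ?exprn_ge0 //.
apply: le_trans (ler_wpM2l _ (h_double w)) _; first by rewrite invr_ge0 exprn_ge0.
rewrite /w normrZ ger0_norm ?exprn_ge0 // powRM ?exprn_ge0 // powR2_expn.
rewrite exprS exprMn exprVn invfM le_eqVlt; apply/predU1P; left.
by ring.
Qed.

Lemma hyers_seq_is_cvg z : cvgn (hyers_seq^~ z).
Proof.
set u := hyers_seq^~ z.
have tele : cvgn (series (telescope u)).
  apply: normed_cvg.
  apply: (@series_le_cvg _ (fun n => `|telescope u n|)
    (geometric (theta / 2) 2^-1 + geometric (theta / 2 * `|z| `^ q) (2 `^ q / 2))).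
  - by move=> n; exact: normr_ge0.
  - by move=> n; rewrite /= addr_ge0 // !mulr_ge0
      ?exprn_ge0 ?divr_ge0 ?invr_ge0 ?powR_ge0.
  - by move=> n; exact: hyers_seq_step.
  rewrite seriesD; apply: is_cvgD; apply: is_cvg_geometric_series.
    exact: half_lt1.
  by rewrite -[X in _ / X]expr1; apply: powR2_ratio_lt1.
have -> : u = (fun n => u 0%N + series (telescope u) n).
  by apply/funext => n; exact: eq_sum_telescope.
by apply: is_cvgD => //; exact: is_cvg_cst.
Qed.

Lemma hyers_seq_cvg z : hyers_seq^~ z @ \oo --> hyers_lim z.
Proof. exact: hyers_seq_is_cvg. Qed.

End HyersSequence.

Definition ba_ring (R : numFieldType) (X : completeNormedModType R)
  (mul : X -> X -> X) (one : X) (H : unital_banach_algebra mul one) : Type := X.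
HB.instance Definition _ R X mul one H := GRing.Zmodule.on (@ba_ring R X mul one H).
HB.instance Definition _ R X mul one H :=
  GRing.Zmodule_isPzRing.Build (@ba_ring R X mul one H)
    (ba_mulA H) (ba_mul1x H) (ba_mulx1 H) (ba_mulDl H) (ba_mulDr H).

Section JordanTripleStability.
Variables (R : realType) (X : completeNormedModType R) (mul : X -> X -> X) (one : X).
Variables (h : X -> X) (theta p q : R).
Hypothesis HX : unital_banach_algebra mul one.
Hypothesis theta_ge0 : 0 <= theta.
Hypothesis p_lt2 : p < 2.
Hypothesis q_lt1 : q < 1.
Hypothesis h_double : forall z, `|h (2 *: z) - 2 *: h z| <= theta * (1 + `|z| `^ q).

Local Notation "x ** y" := (mul x y) (at level 40, left associativity).

Definition jt_defect x y :=
  h (x ** y ** x) - h x ** y ** x - x ** h y ** x - x ** y ** h x.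

Hypothesis h_jt : forall x y, `|jt_defect x y| <= theta * (`|x| `^ p + `|y| `^ q).

Local Notation hyers_seq := (hyers_seq h).
Local Notation hyers_lim := (hyers_lim h).

Lemma mulBl (x y z : X) : (x - y) ** z = x ** z - y ** z.
Proof. exact: (@mulrBl (ba_ring HX)). Qed.

Lemma mulBr (x y z : X) : x ** (y - z) = x ** y - x ** z.
Proof. exact: (@mulrBr (ba_ring HX)). Qed.

Lemma norm_mul3_le (a b c : X) : `|a ** b ** c| <= `|a| * `|b| * `|c|.
Proof.
apply: le_trans (ba_normM_le HX _ _) _.
by rewrite ler_wpM2r // (ba_normM_le HX).
Qed.

Lemma cvg_mul3 (u : nat -> X) l a b : u @ \oo --> l ->
  [/\ (fun n => u n ** a ** b) @ \oo --> l ** a ** b,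
      (fun n => a ** u n ** b) @ \oo --> a ** l ** b &
      (fun n => a ** b ** u n) @ \oo --> a ** b ** l].
Proof.
move=> ul; split; move: ul.
- apply: (cvg_lipschitz (f := fun z => z ** a ** b) (k := `|a| * `|b|)) => z z' /=.
  by rewrite -!mulBl mulrC mulrA; exact: norm_mul3_le.
- apply: (cvg_lipschitz (f := fun z => a ** z ** b) (k := `|a| * `|b|)) => z z' /=.
  by rewrite -mulBl -mulBr mulrAC; exact: norm_mul3_le.
- apply: (cvg_lipschitz (f := fun z => a ** b ** z) (k := `|a| * `|b|)) => z z' /=.
  by rewrite -mulBr; exact: norm_mul3_le.
Qed.

Let mulZl := ba_mulZl HX.
Let mulZr := ba_mulZr HX.

Lemma hyers_jt_defect n x y :
  hyers_seq n (x ** y ** x) - h x ** y ** x - x ** hyers_seq n y ** x - x ** y ** h x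
  = (2 ^+ n)^-1 *: jt_defect x (2 ^+ n *: y).
Proof.
have c0 : (2 : R) ^+ n != 0 by rewrite expf_neq0 // pnatr_eq0.
by rewrite /jt_defect /hyers_seq !(mulZl, mulZr) !scalerBr !scalerA mulVf // !scale1r.
Qed.

Lemma hyers_jt_defect3 n x y :
  hyers_seq (3 * n) (x ** y ** x) - hyers_seq n x ** y ** x - x ** hyers_seq n y ** x
    - x ** y ** hyers_seq n x
  = (2 ^+ n ^+ 3)^-1 *: jt_defect (2 ^+ n *: x) (2 ^+ n *: y).
Proof.
set c : R := 2 ^+ n.
have c0 : c != 0 by rewrite expf_neq0 // pnatr_eq0.
have c3 : c ^+ 3 = c * c * c by rewrite !exprS expr0 mulr1 mulrA.
rewrite /jt_defect /hyers_seq mulnC exprM -/c c3 !(mulZl, mulZr) !scalerBr !scalerA.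
have -> : (c * c * c)^-1 * (c * c) = c^-1 by field.
by rewrite invfM.
Qed.

Lemma hyers_jt_defect_le n x y :
  `|hyers_seq n (x ** y ** x) - h x ** y ** x - x ** hyers_seq n y ** x - x ** y ** h x|
  <= geometric (theta * `|x| `^ p) 2^-1 n
     + geometric (theta * `|y| `^ q) (2 `^ q / 2) n.
Proof.
have c0 : (0 : R) <= 2 ^+ n by rewrite exprn_ge0.
rewrite hyers_jt_defect normrZ ger0_norm ?invr_ge0 //.
apply: le_trans (ler_wpM2l _ (h_jt _ _)) _; first by rewrite invr_ge0.
rewrite normrZ ger0_norm // powRM // powR2_expn /=.
rewrite exprMn exprVn le_eqVlt; apply/predU1P; left.
by field; rewrite expf_neq0 // pnatr_eq0.
Qed.

Lemma hyers_jt_defect3_le n x y :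
  `|hyers_seq (3 * n) (x ** y ** x) - hyers_seq n x ** y ** x
    - x ** hyers_seq n y ** x - x ** y ** hyers_seq n x|
  <= geometric (theta * `|x| `^ p) (2 `^ p / 2 ^+ 3) n
     + geometric (theta * `|y| `^ q) (2 `^ q / 2 ^+ 3) n.
Proof.
have c0 : (0 : R) <= 2 ^+ n by rewrite exprn_ge0.
rewrite hyers_jt_defect3 normrZ ger0_norm ?invr_ge0 ?exprn_ge0 //.
apply: le_trans (ler_wpM2l _ (h_jt _ _)) _; first by rewrite invr_ge0 exprn_ge0.
rewrite !normrZ ger0_norm // !powRM // !powR2_expn /=.
rewrite !exprMn !exprVn -!exprM mulnC exprM.
rewrite le_eqVlt; apply/predU1P; left.
by field; rewrite !expf_neq0 // pnatr_eq0.
Qed.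

Let hyers_cvg := hyers_seq_cvg theta_ge0 q_lt1 h_double.

Lemma hyers_lim_jt_h x y :
  hyers_lim (x ** y ** x) = h x ** y ** x + x ** hyers_lim y ** x + x ** y ** h x.
Proof.
apply/eqP; rewrite -subr_eq0 !opprD !addrA; apply/eqP.
apply: (cvg_norm_le_eq0 _ _ (fun n => hyers_jt_defect_le n x y)).
- have [_ cvg_mid _] := cvg_mul3 x x (hyers_cvg (z := y)).
  by apply: cvgB; [apply: cvgB; [apply: cvgB|]|] => //; exact: cvg_cst.
- rewrite -[0](addr0 0); apply: cvgD; apply: cvg_geometric; first exact: half_lt1.
  by rewrite -[X in _ / X]expr1; apply: powR2_ratio_lt1.
Qed.

Lemma hyers_lim_jt x y : hyers_lim (x ** y ** x) =
  hyers_lim x ** y ** x + x ** hyers_lim y ** x + x ** y ** hyers_lim x.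
Proof.
apply/eqP; rewrite -subr_eq0 !opprD !addrA; apply/eqP.
apply: (cvg_norm_le_eq0 _ _ (fun n => hyers_jt_defect3_le n x y)).
- have [cvg_l _ _] := cvg_mul3 y x (hyers_cvg (z := x)).
  have [_ _ cvg_r] := cvg_mul3 x y (hyers_cvg (z := x)).
  have [_ cvg_mid _] := cvg_mul3 x x (hyers_cvg (z := y)).
  apply: cvgB; [apply: cvgB; [apply: cvgB|]|] => //.
  exact: (cvg_subseq_mul (k := 3) isT (hyers_cvg (z := x ** y ** x))).
- rewrite -[0](addr0 0); apply: cvgD; apply: cvg_geometric; apply: powR2_ratio_lt1.
    by apply: lt_trans p_lt2 _; rewrite ltr_nat.
  by apply: lt_trans q_lt1 _; rewrite ltr1n.
Qed.

Hypothesis X_prime : forall a b : X, (forall r, a ** r ** b = 0) -> a = 0 \/ b = 0.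
Hypothesis h0 : h 0 = 0.

Lemma hyers_lim0 : hyers_lim 0 = 0.
Proof.
rewrite /hyers_lim (_ : hyers_seq^~ 0 = fun=> 0) ?lim_cst //.
by apply/funext => n; rewrite /hyers_seq scaler0 h0 scaler0.
Qed.

Lemma hyers_lim_eq x : hyers_lim x = h x.
Proof.
have sym0 r : (hyers_lim x - h x) ** r ** x + x ** r ** (hyers_lim x - h x) = 0.
  have := hyers_lim_jt_h x r; rewrite hyers_lim_jt => E.
  by apply: (eq_of_sub_eq E); rewrite !mulBl !mulBr; abel.
have [/eqP|->] := sandwich_sym_eq0 (A := ba_ring HX) X_prime (@addrr_eq0 _ _) sym0.
  by rewrite subr_eq0 => /eqP.
by rewrite hyers_lim0 h0.
Qed.

Lemma h_jordan_triple x y :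
  h (x ** y ** x) = h x ** y ** x + x ** h y ** x + x ** y ** h x.
Proof. by rewrite -!hyers_lim_eq hyers_lim_jt. Qed.

End JordanTripleStability.

Lemma quadratic_stability_double (R : realType) (X : normedModType R) (h : X -> X)
    (theta p q : R) (m : int) :
  (forall x, h (- x) = - h x) -> 0 <= theta -> m != 0 ->
  (forall x y,
     `|h (x + y *~ m) + h (x - y *~ m) - h x *+ 2 + h y *~ (m ^+ 2 * 2)
        - h (y *+ 2) *~ (m ^+ 2)| <= theta * (`|x| `^ p + `|y| `^ q)) ->
  forall z, `|h (2 *: z) - 2 *: h z| <= theta * (1 + `|z| `^ q).
Proof.
move=> h_odd theta_ge0 m0 h_quad z.
have := h_quad 0 z; rewrite add0r sub0r h_odd odd_map0 // mul0rn subr0 subrr add0r.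
have -> : h z *~ (m ^+ 2 * 2) - h (z *+ 2) *~ (m ^+ 2) =
    (h z *+ 2 - h (z *+ 2)) *~ (m ^+ 2).
  by rewrite mulrzBl mulrC mulrzA.
rewrite -scaler_int normrZ !scaler_nat distrC => le_quad.
apply: le_trans (le_trans _ le_quad) _.
  rewrite -[leLHS]mul1r ler_wpM2r // rmorphXn /= normrX -intr_norm exprn_ege1 //.
  by rewrite ler1z -gtz0_ge1 normr_gt0.
(* [0 `^ p] is 1 if p = 0 and 0 otherwise. *)
by rewrite ler_wpM2l // lerD2r normr0 /powR eqxx; case: (p == 0).
Qed.

Theorem corollary3p3 (R : realType) (X : completeNormedModType R)
  (mul : X -> X -> X) (one : X) (h : X -> X)
  (theta p q : R) (m : int) :
  unital_banach_algebra mul one ->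
  prime_algebra mul ->
  (exists e : X, nontrivial_idempotent mul one e) ->
  (forall x : X, h (- x) = - h x) ->
  0 <= theta -> m != 0 -> (2 %| m)%Z -> p < 2 -> q < 1 ->
  (forall x y : X,
     `|h (mul (mul x y) x) - mul (mul (h x) y) x - mul (mul x (h y)) x
        - mul (mul x y) (h x)|
       <= theta * (`|x| `^ p + `|y| `^ q)) ->
  (forall x y : X,
     `|h (x + y *~ m) + h (x - y *~ m) - h x *+ 2 + h y *~ (m ^+ 2 * 2)
        - h (y *+ 2) *~ (m ^+ 2)|
       <= theta * (`|x| `^ p + `|y| `^ q)) ->
  derivation mul h.
Proof.
move=> HX [_ X_prime] [e [ee [e0 e1]]] h_odd theta_ge0 m0 _ p_lt2 q_lt1 h_jt h_quad.
have h0 := odd_map0 h_odd.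
have h_double := quadratic_stability_double h_odd theta_ge0 m0 h_quad.
have hJ := h_jordan_triple HX theta_ge0 p_lt2 q_lt1 h_double h_jt X_prime h0.
exact: (jordan_triple_derivation (A := ba_ring HX) X_prime (@addrr_eq0 _ _)
  ee e0 e1 hJ).
Qed.
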